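(* Let $Y$ be a normed linear space, $F\subset\mathbb R^n$ and $x\in F\cap\operatorname{der}F$. If $f\colon F\to Y$ is relatively strictly differentiable at $x$ and $\operatorname{Ptg}(F,x)$ spans $\mathbb R^n$, then the relative strict derivative of $f$ at $x$ is determined uniquely.
   Context: $\operatorname{der}F$ is the set of accumulation points of $F$. $\operatorname{Ptg}(F,x)$ is the set of $v\in\mathbb R^n$ for which there are $x_k,y_k\in F$, $\alpha_k\in\mathbb R$ with $x_k\to x$, $y_k\to x$, $\alpha_k(y_k-x_k)\to v$. $L\in\mathcal L(\mathbb R^n,Y)$ is a relative strict derivative of $f$ at $x$ if $x$ is isolated in $F$ or $\|f(y)-f(z)-L(y-z)\|/|y-z|\to0$ as $y,z\to x$, $y,z\in F$, $y\ne z$ (with $y=x$ or $z=x$ allowed); $f$ is relatively strictly differentiable at $x$ if such $L$ exists. *)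

From HB Require Import structures.
From mathcomp Require Import all_boot all_order all_algebra.
From mathcomp Require Import all_classical all_reals all_analysis.
Set Implicit Arguments. Unset Strict Implicit. Unset Printing Implicit Defensive.
Import Order.TTheory GRing.Theory Num.Theory.
Import numFieldNormedType.Exports.
Local Open Scope classical_set_scope.
Local Open Scope ring_scope.

Definition der {R : realType} {n : nat} (F : set 'rV[R]_n) : set 'rV[R]_n :=
  limit_point F.

Definition Ptg {R : realType} {n : nat} (F : set 'rV[R]_n) (x : 'rV[R]_n)
  : set 'rV[R]_n :=
  [set v | exists (xs ys : nat -> 'rV[R]_n) (a : nat -> R),
     [/\ forall k, F (xs k), forall k, F (ys k),
         xs @ \oo --> x, ys @ \oo --> x &
         (fun k => a k *: (ys k - xs k)) @ \oo --> v]].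

Definition spans {R : realType} {n : nat} (S : set 'rV[R]_n) : Prop :=
  forall w : 'rV[R]_n, exists (m : nat) (c : 'I_m -> R) (v : 'I_m -> 'rV[R]_n),
    (forall i, S (v i)) /\ w = \sum_(i < m) c i *: v i.

Definition rel_strict_deriv {R : realType} {n : nat} {Y : normedModType R}
  (F : set 'rV[R]_n) (f : 'rV[R]_n -> Y) (x : 'rV[R]_n)
  (L : {linear 'rV[R]_n -> Y}) : Prop :=
  ~ der F x \/
  forall e : R, 0 < e -> exists2 d : R, 0 < d &
    forall y z, F y -> F z -> y != z -> `|y - x| < d -> `|z - x| < d ->
      `|f y - f z - L (y - z)| / `|y - z| < e.

From HB Require Import structures.
From mathcomp Require Import all_boot all_order all_algebra.
From mathcomp Require Import all_classical all_reals all_analysis.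
Set Implicit Arguments. Unset Strict Implicit. Unset Printing Implicit Defensive.
Import Order.TTheory GRing.Theory Num.Theory.
Import numFieldNormedType.Exports.
Local Open Scope classical_set_scope.
Local Open Scope ring_scope.

(* If L1 and L2 are both relative strict derivatives at the accumulation
   point x, then D := L1 - L2 satisfies |D(y - z)| <= e |y - z| for all
   y, z in F close enough to x.  Scaling such secants a_k (y_k - x_k) and
   passing to the limit (D is continuous, being linear on R^n) gives
   |D v| <= e |v| for every paratangent vector v and every e > 0, so D
   vanishes on Ptg(F, x) and hence on its span, which is all of R^n. *)

Lemma mx_norm_entry_le (R : realDomainType) (m n : nat) (A : 'M[R]_(m, n)) i j :
  `|A i j| <= `|A|.
Proof.
rewrite [leRHS]/Num.norm /= mx_normrE.
by apply/bigmax_geP; right; exists (i, j).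
Qed.

Lemma linear_rV_bounded (R : realFieldType) (n : nat) (Y : normedModType R)
    (L : {linear 'rV[R]_n -> Y}) :
  exists2 C : R, 0 <= C & forall u, `|L u| <= C * `|u|.
Proof.
exists (\sum_(j < n) `|L (delta_mx 0 j)|); first exact: sumr_ge0.
move=> u; rewrite {1}(row_sum_delta u) linear_sum mulr_suml.
apply: le_trans (ler_norm_sum _ _ _) _; apply: ler_sum => j _.
by rewrite linearZ normrZ mulrC ler_wpM2l ?mx_norm_entry_le.
Qed.

Lemma linear_rV_continuous (R : realFieldType) (n : nat) (Y : normedModType R)
    (L : {linear 'rV[R]_n -> Y}) : continuous L.
Proof.
have [C _ LC] := linear_rV_bounded L.
apply/bounded_linear_continuous/linear_boundedP.
near=> r => u; apply: le_trans (LC u) (ler_wpM2r (normr_ge0 u) _).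
by near: r; apply: nbhs_pinfty_ge; rewrite num_real.
Unshelve. all: by end_near. Qed.

Section relative_strict_derivative.
Variables (R : realType) (n : nat) (Y : normedModType R).
Variables (F : set 'rV[R]_n) (x : 'rV[R]_n).

Definition secant_negligible (L : 'rV[R]_n -> Y) : Prop :=
  forall e : R, 0 < e -> exists2 d : R, 0 < d &
    forall y z, F y -> F z -> `|y - x| < d -> `|z - x| < d ->
      `|L (y - z)| <= e * `|y - z|.

Lemma rel_strict_deriv_sub_negligible (f : 'rV[R]_n -> Y)
    (L1 L2 : {linear 'rV[R]_n -> Y}) :
  der F x -> rel_strict_deriv F f x L1 -> rel_strict_deriv F f x L2 ->
  secant_negligible (L1 \- L2).
Proof.
move=> derFx [//|D1] [//|D2] e e0.
have e20 : 0 < e / 2 by rewrite divr_gt0.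
have [d1 d10 Hd1] := D1 _ e20; have [d2 d20 Hd2] := D2 _ e20.
exists (Num.min d1 d2); first by rewrite lt_min d10 d20.
move=> y z Fy Fz; rewrite !lt_min => /andP[y1 y2] /andP[z1 z2].
have [->|yz] := eqVneq y z; first by rewrite subrr linear0 !normr0 mulr0.
have yz0 : 0 < `|y - z| by rewrite normr_gt0 subr_eq0.
have := Hd1 _ _ Fy Fz yz y1 z1; have := Hd2 _ _ Fy Fz yz y2 z2.
rewrite !ltr_pdivrMr // => A2 A1.
have -> : (L1 \- L2) (y - z) =
    (f y - f z - L2 (y - z)) - (f y - f z - L1 (y - z)).
  by rewrite /= opprB [RHS]addrC [RHS]addrA subrK.
apply: le_trans (ler_normB _ _) _.
by rewrite [e]splitr mulrDl ltW // ltrD.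
Qed.

Lemma secant_negligible_Ptg_eq0 (L : {linear 'rV[R]_n -> Y}) v :
  secant_negligible L -> Ptg F x v -> L v = 0.
Proof.
move=> Lneg [xs [ys [a [Fxs Fys xsx ysx uv]]]].
pose u k := a k *: (ys k - xs k).
have Lv_le e : 0 < e -> `|L v| <= e * `|v|.
  move=> e0; have [d d0 Ld] := Lneg e e0.
  have Lu : `|L (u k)| @[k --> \oo] --> `|L v|.
    apply: cvg_norm; apply: continuous_cvg uv.
    exact: (@linear_rV_continuous _ _ _ L v).
  have eu : e * `|u k| @[k --> \oo] --> e * `|v|.
    by apply: cvgMr; exact: cvg_norm.
  apply: ler_cvg_to Lu eu _.
  near=> k; rewrite /u linearZ !normrZ mulrCA ler_wpM2l //.
  by apply: Ld => //; near: k;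
    [exact: cvgr_distC_lt ysx _ d0 | exact: cvgr_distC_lt xsx _ d0].
apply/eqP; rewrite -normr_le0; apply/ler_addgt0Pr => e e0; rewrite add0r.
have v1 : 0 < `|v| + 1 by rewrite ltr_wpDl.
apply: le_trans (Lv_le _ (divr_gt0 e0 v1)) _.
by rewrite mulrAC ler_pdivrMr // ler_pM2l // lerDl.
Unshelve. all: by end_near. Qed.

End relative_strict_derivative.

Lemma linear_eq_span (R : realType) (n : nat) (Y : normedModType R)
    (S : set 'rV[R]_n) (L1 L2 : {linear 'rV[R]_n -> Y}) :
  spans S -> (forall v, S v -> L1 v = L2 v) -> forall w, L1 w = L2 w.
Proof.
move=> spanS eqS w; have [m [c [v [Sv ->]]]] := spanS w.
by rewrite !linear_sum; apply: eq_bigr => i _; rewrite !linearZ /= eqS.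
Qed.

Theorem lemmaB2 (R : realType) (n : nat) (Y : normedModType R)
  (F : set 'rV[R]_n) (x : 'rV[R]_n) (f : 'rV[R]_n -> Y)
  (L1 L2 : {linear 'rV[R]_n -> Y}) :
  F x -> der F x -> spans (Ptg F x) ->
  rel_strict_deriv F f x L1 -> rel_strict_deriv F f x L2 ->
  forall v, L1 v = L2 v.
Proof.
move=> _ derFx spanPtg D1 D2; apply: linear_eq_span spanPtg _ => v Ptgv.
have D12 := rel_strict_deriv_sub_negligible derFx D1 D2.
by apply/eqP; rewrite -subr_eq0; apply/eqP; exact: secant_negligible_Ptg_eq0 D12 Ptgv.
Qed.
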